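(* Let $\lambda>1$, $A=\mathrm{diag}(1,\lambda)$, and $f(x)=\tfrac12 x^TAx$ on $\mathbb{R}^2$. Consider the iteration $x_{k+1}=x_k-\alpha_kg_k$, $g_k=Ax_k$, where $x_1\in\mathbb{R}^2$, $x_2=x_1-\alpha_1g_1$ for some $\alpha_1>0$, and for $k\ge 2$ $$\alpha_k=\gamma_k\frac{s_{k-1}^Ts_{k-1}}{s_{k-1}^Ty_{k-1}}+(1-\gamma_k)\frac{s_{k-1}^Ty_{k-1}}{y_{k-1}^Ty_{k-1}},\qquad s_{k-1}=x_k-x_{k-1},\ y_{k-1}=g_k-g_{k-1},$$ with $\gamma_k\in(0,1)$ for all $k$. Assume $g_1^{(i)}\neq0$ and $g_2^{(i)}\ne0$ for $i=1,2$. Let $q_k=(g_k^{(1)})^2/(g_k^{(2)})^2$, $M_k=\log q_k$, let $\theta$ be a root of $\theta^2-\theta+2=0$, and $\xi_k=M_k+(\theta-1)M_{k-1}$. If $|\xi_2|>8\log\lambda$, then $\{\|g_k\|\}$ converges to zero $R$-superlinearly.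
   Context: $g_k^{(i)}$ is the $i$-th component of $g_k$ and $\|\cdot\|$ the Euclidean norm. A nonnegative sequence $\{a_k\}$ converges to zero $R$-superlinearly if $\lim_{k\to\infty}a_k^{1/k}=0$. *)

From Stdlib Require Import Reals.
From Coquelicot Require Import Coquelicot.
Open Scope R_scope.

(* Vectors of R^2 as pairs; component i=1 is fst, i=2 is snd. *)
Definition vec := (R * R)%type.
Definition dot (u v : vec) : R := fst u * fst v + snd u * snd v.
Definition vsub (u v : vec) : vec := (fst u - fst v, snd u - snd v).
Definition vscale (a : R) (u : vec) : vec := (a * fst u, a * snd u).
Definition vnorm (u : vec) : R := sqrt (dot u u).

(* A = diag(1, lam); gradient of f(x) = 1/2 x^T A x is A x. *)
Definition Amul (lam : R) (x : vec) : vec := (fst x, lam * snd x).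

(* k-th root of a nonnegative number a_k, with 0^(1/k) = 0. *)
Definition kth_root_seq (a : nat -> R) : nat -> R :=
  fun k => if Rlt_dec 0 (a k) then Rpower (a k) (/ INR k) else 0.

Definition R_superlinear (a : nat -> R) : Prop :=
  is_lim_seq (kth_root_seq a) 0.

(* The gradient components evolve multiplicatively: g_{k+1}^(1) = (1 - α_k) g_k^(1) and
   g_{k+1}^(2) = (1 - λ α_k) g_k^(2).  Writing P, Q for the squared components of g_{k-1},
   one has 1 - α_k = (λ - 1) Q U and 1 - λ α_k = (1 - λ) P V with V <= U <= λ V, so
   M_{k+1} = M_k - 2 M_{k-1} + e_k with 0 <= e_k <= 2 ln λ.  As θ (θ - 1) = -2 this reads
   ξ_{k+1} = θ ξ_k + e_k with |θ| = √2, hence |ξ_k| - 8 ln λ grows like (√2)^k.  Within any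
   four consecutive steps M takes a value >= |ξ|/10 and one <= 4 ln λ - |ξ|/10; a large
   positive M_{k-1} lowers ln (g_{k+1}^(1))^2 by M_{k-1}, a large negative one lowers
   ln (g_{k+1}^(2))^2, while each step raises them by at most 2 ln λ.  So
   ln ‖g_k‖ <= A + B k - d (√2)^k, and ‖g_k‖^(1/k) -> 0. *)

From Stdlib Require Import Reals Lra Lia.
From Coquelicot Require Import Coquelicot.
Open Scope R_scope.

Lemma quadratic_le_pow (q : R) (n : nat) : 1 < q -> (INR n * (sqrt q - 1)) ^ 2 <= q ^ n.
Proof.
intros Hq.
set (s := sqrt q - 1).
assert (Hs : 0 < s) by (unfold s; pose proof (sqrt_lt_1_alt 1 q); rewrite sqrt_1 in *; lra).
assert (Hlin : 1 + INR n * s <= sqrt q ^ n)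
  by (replace (sqrt q) with (1 + s) by (unfold s; ring); apply Rle_pow_lin; lra).
replace (q ^ n) with ((sqrt q ^ n) ^ 2)
  by (rewrite <- pow_mult, Nat.mul_comm, pow_mult, pow2_sqrt; lra).
assert (0 <= INR n * s) by (apply Rmult_le_pos; [apply pos_INR | lra]).
apply pow_incr; lra.
Qed.

Lemma geometric_dominates_affine (q d A B : R) : 1 < q -> 0 < d ->
  exists N : nat, forall n : nat, (N <= n)%nat -> A + B * INR n < d * q ^ n.
Proof.
intros Hq Hd.
set (c := d * (sqrt q - 1) ^ 2).
assert (Hc : 0 < c).
{ pose proof (sqrt_lt_1_alt 1 q). rewrite sqrt_1 in *.
  apply Rmult_lt_0_compat; [lra | apply pow_lt; lra]. }
destruct (INR_archimed c (Rabs A + Rabs B) Hc) as [N HN].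
exists (S N). intros n Hn.
assert (HnN : INR N + 1 <= INR n) by (rewrite <- S_INR; apply le_INR; lia).
pose proof (pos_INR N).
assert (Hquad : c * (INR n * INR n) <= d * q ^ n).
{ pose proof (quadratic_le_pow q n Hq). unfold c. simpl in *. nra. }
assert (Hlin : Rabs A + Rabs B < c * INR n).
{ assert (0 <= c * (INR n - INR N - 1)) by (apply Rmult_le_pos; lra). lra. }
assert (HA : A <= Rabs A * INR n) by (pose proof (Rle_abs A); pose proof (Rabs_pos A); nra).
assert (HB : B * INR n <= Rabs B * INR n)
  by (apply Rmult_le_compat_r; [lra | apply Rle_abs]).
nra.
Qed.

Lemma R_superlinear_of_ln_le_geometric (u : nat -> R) (m : nat) (A B d q : R) :
  1 < q -> 0 < d ->
  (forall n, 0 < u (n + m)%nat /\ ln (u (n + m)%nat) <= A + B * INR n - d * q ^ n) ->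
  R_superlinear u.
Proof.
intros Hq Hd Hu.
apply is_lim_seq_spec. intros eps.
destruct (geometric_dominates_affine q d (A - INR m * ln eps) (B - ln eps) Hq Hd) as [N HN].
exists (S N + m)%nat. intros k Hk.
replace k with ((k - m) + m)%nat by lia.
set (n := (k - m)%nat).
assert (Hn : (S N <= n)%nat) by (unfold n; lia).
destruct (Hu n) as [Hpos Hln].
specialize (HN n ltac:(lia)).
assert (Hk0 : 0 < INR (n + m)) by (apply lt_0_INR; lia).
assert (Hlt : ln (u (n + m)%nat) < INR (n + m) * ln eps)
  by (rewrite plus_INR; lra).
unfold kth_root_seq. destruct (Rlt_dec 0 (u (n + m)%nat)) as [_|]; [|lra].
rewrite Rminus_0_r, Rabs_right by (left; apply exp_pos).
rewrite <- (exp_ln eps) by apply cond_pos.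
apply exp_increasing.
apply Rmult_lt_reg_l with (INR (n + m)); [lra|].
rewrite <- Rmult_assoc, Rinv_r, Rmult_1_l by lra. exact Hlt.
Qed.

(* α_k as a function of the squared components P, Q of g_{k-1}. *)
Definition bb_alpha (lam gam P Q : R) : R :=
  gam * ((P + Q) / (P + lam * Q)) + (1 - gam) * ((P + lam * Q) / (P + lam ^ 2 * Q)).

Section BarzilaiBorweinStep.

Variables lam gam P Q : R.
Hypothesis lam_gt1 : 1 < lam.
Hypothesis gam_bounds : 0 < gam < 1.
Hypothesis P_pos : 0 < P.
Hypothesis Q_pos : 0 < Q.

Let alpha := bb_alpha lam gam P Q.
Let D1 := P + lam * Q.
Let D2 := P + lam ^ 2 * Q.
(* The ratio U / V, which lies in [1, lam], is the source of the error term e_k. *)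
Let U := gam / D1 + (1 - gam) * lam / D2.
Let V := gam / D1 + (1 - gam) / D2.

Let lam_pos : 0 < lam.
Proof. lra. Qed.

Let D1_pos : 0 < D1.
Proof. unfold D1; nra. Qed.

Let D2_pos : 0 < D2.
Proof. unfold D2; nra. Qed.

Lemma bb_alpha_pos : 0 < alpha.
Proof.
unfold alpha, bb_alpha; fold D1 D2.
assert (0 < (P + Q) / D1) by (apply Rdiv_lt_0_compat; lra).
assert (0 < D1 / D2) by (apply Rdiv_lt_0_compat; lra).
nra.
Qed.

Let one_sub_bb_alpha : 1 - alpha = (lam - 1) * Q * U.
Proof. unfold alpha, bb_alpha, U; fold D1 D2; unfold D1, D2; field; fold D1 D2; lra. Qed.

Let one_sub_lam_bb_alpha : 1 - lam * alpha = (1 - lam) * P * V.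
Proof. unfold alpha, bb_alpha, V; fold D1 D2; unfold D1, D2; field; fold D1 D2; lra. Qed.

Let convex_le (u v c : R) : u <= c -> v <= c -> gam * u + (1 - gam) * v <= c.
Proof. intros; nra. Qed.

Let weights_ordered : 0 < V /\ V <= U <= lam * V.
Proof.
assert (0 < gam / D1) by (apply Rdiv_lt_0_compat; lra).
assert (0 < (1 - gam) / D2) by (apply Rdiv_lt_0_compat; lra).
assert (0 <= (lam - 1) * (gam / D1)) by nra.
assert (0 <= (lam - 1) * ((1 - gam) / D2)) by nra.
unfold U, V; unfold Rdiv in *; repeat split; lra.
Qed.

Let weights_bounded : lam * Q * U <= 1 /\ P * U <= lam /\ P * V <= 1 /\ lam * Q * V <= 1.
Proof.
assert (Q1 : lam * Q / D1 <= 1) by (apply (Rdiv_le_1 _ _ D1_pos); unfold D1; lra).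
assert (Q2 : lam ^ 2 * Q / D2 <= 1) by (apply (Rdiv_le_1 _ _ D2_pos); unfold D2; lra).
assert (0 < lam * Q) by nra.
assert (lam * Q <= lam ^ 2 * Q) by (replace (lam ^ 2 * Q) with (lam * (lam * Q)) by ring; nra).
assert (Q3 : lam * Q / D2 <= 1) by (apply (Rdiv_le_1 _ _ D2_pos); unfold D2; lra).
assert (P1 : P / D1 <= 1) by (apply (Rdiv_le_1 _ _ D1_pos); unfold D1; nra).
assert (P2 : P / D2 <= 1) by (apply (Rdiv_le_1 _ _ D2_pos); unfold D2; nra).
repeat split.
- replace (lam * Q * U) with (gam * (lam * Q / D1) + (1 - gam) * (lam ^ 2 * Q / D2))
    by (unfold U; field; lra).
  apply convex_le; lra.
- replace (P * U) with (gam * (P / D1) + (1 - gam) * (lam * (P / D2)))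
    by (unfold U; field; lra).
  apply convex_le; nra.
- replace (P * V) with (gam * (P / D1) + (1 - gam) * (P / D2)) by (unfold V; field; lra).
  apply convex_le; lra.
- replace (lam * Q * V) with (gam * (lam * Q / D1) + (1 - gam) * (lam * Q / D2))
    by (unfold V; field; lra).
  apply convex_le; lra.
Qed.

Lemma bb_alpha_lt1 : alpha < 1.
Proof. assert (0 < (lam - 1) * Q * U) by (apply Rmult_lt_0_compat; nra). lra. Qed.

Lemma one_sub_lam_bb_alpha_neq0 : 1 - lam * alpha <> 0.
Proof. rewrite one_sub_lam_bb_alpha. apply Rmult_integral_contrapositive; split; nra. Qed.

Lemma bb_first_component_bound : (1 - alpha) ^ 2 * P <= lam ^ 2 * Q.
Proof.
rewrite one_sub_bb_alpha.
destruct weights_ordered as (HV & HVU & _).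
destruct weights_bounded as (HQU & HPU & _ & _).
replace (((lam - 1) * Q * U) ^ 2 * P) with ((lam - 1) ^ 2 * ((lam * Q * U) * (P * U / lam)) * Q)
  by (field; lra).
assert (0 <= P * U / lam <= 1).
{ split; [apply Rdiv_le_0_compat | apply (Rdiv_le_1 _ _ lam_pos)]; nra. }
assert (0 <= lam * Q * U) by (apply Rmult_le_pos; nra).
assert (0 <= lam * Q * U * (P * U / lam) <= 1) by (split; nra).
apply Rmult_le_compat_r; [lra|].
assert (0 <= (lam - 1) ^ 2) by apply pow2_ge_0.
nra.
Qed.

Lemma bb_second_component_bound :
  (1 - lam * alpha) ^ 2 <= lam ^ 2 /\ (1 - lam * alpha) ^ 2 * Q <= lam ^ 2 * P.
Proof.
rewrite one_sub_lam_bb_alpha.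
destruct weights_ordered as (HV & _).
destruct weights_bounded as (_ & _ & HPV & HQV).
assert (0 <= (lam - 1) ^ 2) by apply pow2_ge_0.
assert (0 < P * V) by (apply Rmult_lt_0_compat; lra).
split.
- replace (((1 - lam) * P * V) ^ 2) with ((lam - 1) ^ 2 * (P * V) ^ 2) by ring.
  assert (0 <= (P * V) ^ 2 <= 1) by (split; [apply pow2_ge_0 | simpl; nra]).
  nra.
- replace (((1 - lam) * P * V) ^ 2 * Q) with ((lam - 1) ^ 2 * ((P * V) * (lam * Q * V) / lam) * P)
    by (field; lra).
  assert (0 <= lam * Q * V) by (apply Rmult_le_pos; nra).
  assert (0 <= P * V * (lam * Q * V) / lam <= 1)
    by (split; [apply Rdiv_le_0_compat | apply (Rdiv_le_1 _ _ lam_pos)]; nra).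
  apply Rmult_le_compat_r; nra.
Qed.

Lemma bb_component_ratio :
  exists E, 1 <= E <= lam ^ 2 /\ (1 - alpha) ^ 2 * P ^ 2 = (1 - lam * alpha) ^ 2 * Q ^ 2 * E.
Proof.
destruct weights_ordered as (HV & HVU & HUV).
exists ((U / V) ^ 2). split.
- assert (1 <= U / V <= lam)
    by (split; [apply (Rle_div_r _ _ _ HV) | apply (Rle_div_l _ _ _ HV)]; lra).
  split; [nra | apply pow_incr; lra].
- rewrite one_sub_bb_alpha, one_sub_lam_bb_alpha. field. lra.
Qed.

End BarzilaiBorweinStep.

Lemma le_of_increments_le (u : nat -> R) (c : R) :
  (forall n, u (S n) <= u n + c) -> forall m n, u (m + n)%nat <= u m + INR n * c.
Proof.
intros Hu m n. induction n as [|n IH].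
- rewrite Nat.add_0_r. simpl. lra.
- rewrite Nat.add_succ_r, S_INR. specialize (Hu (m + n)%nat). lra.
Qed.

Lemma Cmod_root_theta (theta : C) :
  Cplus (Cminus (Cmult theta theta) theta) (RtoC 2) = RtoC 0 ->
  Cmod theta = sqrt 2 /\ Cmod (Cminus theta (RtoC 1)) = sqrt 2.
Proof.
destruct theta as [tr ti]. intros H.
pose proof (f_equal fst H) as Hre. pose proof (f_equal snd H) as Him. simpl in Hre, Him.
assert (Htr : tr = 1 / 2).
{ assert (Hti : ti <> 0) by (intros ->; nra).
  assert (Hprod : ti * (2 * tr - 1) = 0) by nra.
  destruct (Rmult_integral _ _ Hprod); [contradiction | lra]. }
subst tr.
unfold Cmod, Cminus, Cplus, Copp, RtoC; simpl. split; f_equal; nra.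
Qed.

Lemma sqrt2_bounds : 5 / 4 <= sqrt 2 <= 3 / 2.
Proof. pose proof (sqrt_pos 2). pose proof (sqrt_sqrt 2 ltac:(lra)). split; nra. Qed.

Lemma le_add_of_increments (u w : nat -> R) (c : R) : 0 <= c ->
  (forall n, u (S (S n)) <= u (S n) + c) ->
  (forall n, u (S (S n)) <= u (S n) + c + w n) ->
  forall j k, (j + 2 <= k)%nat -> u k <= u 1%nat + c * INR k + w j.
Proof.
intros Hc Hstep Hstep_w j k Hjk.
pose proof (le_of_increments_le (fun n => u (S n)) c Hstep) as Hinc. simpl in Hinc.
pose proof (Hinc 0%nat j) as Hhead. simpl in Hhead.
pose proof (Hinc (S j) (k - S (S j))%nat) as Htail.
replace (S (S j + (k - S (S j)))) with k in Htail by lia.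
rewrite minus_INR in Htail by lia. rewrite !S_INR in Htail.
pose proof (Hstep_w j). lra.
Qed.

Definition xi (theta : C) (M : nat -> R) (n : nat) : C :=
  Cplus (RtoC (M (S n))) (Cmult (Cminus theta (RtoC 1)) (RtoC (M n))).

Section LogDynamics.

Variables (L : R) (theta : C) (la lb M : nat -> R).
Hypothesis L_nonneg : 0 <= L.
Hypothesis theta_root : Cplus (Cminus (Cmult theta theta) theta) (RtoC 2) = RtoC 0.
Hypothesis la_step : forall n, la (S (S n)) <= la (S n) + 2 * L.
Hypothesis la_step_M : forall n, la (S (S n)) <= la (S n) + 2 * L - M n.
Hypothesis lb_step : forall n, lb (S (S n)) <= lb (S n) + 2 * L.
Hypothesis lb_step_M : forall n, lb (S (S n)) <= lb (S n) + 2 * L + M n.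
Hypothesis M_step :
  forall n, exists e, 0 <= e <= 2 * L /\ M (S (S n)) = M (S n) - 2 * M n + e.
Hypothesis xi0_large : Cmod (xi theta M 0) > 8 * L.

Lemma xi_succ n : exists e, 0 <= e <= 2 * L /\
  xi theta M (S n) = Cplus (Cmult theta (xi theta M n)) (RtoC e).
Proof.
destruct (M_step n) as (e & He & HM).
exists e. split; [exact He|].
unfold xi. rewrite HM, !RtoC_plus, RtoC_minus, RtoC_mult.
transitivity (Cplus (Cmult theta (xi theta M n)) (RtoC e)
  - Cmult (Cplus (Cminus (Cmult theta theta) theta) (RtoC 2)) (RtoC (M n)))%C.
- unfold xi. ring.
- rewrite theta_root. unfold xi. ring.
Qed.

Lemma Cmod_xi_succ_ge n : sqrt 2 * Cmod (xi theta M n) - 2 * L <= Cmod (xi theta M (S n)).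
Proof.
destruct (xi_succ n) as (e & He & ->).
assert (Htri : Cmod (Cmult theta (xi theta M n))
   <= Cmod (Cplus (Cmult theta (xi theta M n)) (RtoC e)) + Cmod (Copp (RtoC e))).
{ eapply Rle_trans; [|apply Cmod_triangle]. right. f_equal. ring. }
rewrite Cmod_mult, Cmod_opp, Cmod_R, (proj1 (Cmod_root_theta theta theta_root)) in Htri.
rewrite Rabs_right in Htri by lra. lra.
Qed.

(* The threshold 8 L is where 8 √2 >= 10 absorbs the error 2 L of Cmod_xi_succ_ge. *)
Lemma Cmod_xi_ge n :
  (Cmod (xi theta M 0) - 8 * L) * sqrt 2 ^ n <= Cmod (xi theta M n) - 8 * L.
Proof.
induction n as [|n IH].
- simpl. lra.
- pose proof (Cmod_xi_succ_ge n). pose proof sqrt2_bounds.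
  assert (Hstep : sqrt 2 * (Cmod (xi theta M n) - 8 * L) <= Cmod (xi theta M (S n)) - 8 * L).
  { assert (0 <= (sqrt 2 - 5 / 4) * L) by (apply Rmult_le_pos; lra). lra. }
  simpl pow. rewrite <- Rmult_assoc, (Rmult_comm _ (sqrt 2)), Rmult_assoc.
  eapply Rle_trans; [|exact Hstep].
  apply Rmult_le_compat_l; lra.
Qed.

Lemma Cmod_xi_le n : Cmod (xi theta M n) <= Rabs (M (S n)) + 3 / 2 * Rabs (M n).
Proof.
unfold xi. eapply Rle_trans; [apply Cmod_triangle|].
rewrite Cmod_mult, (proj2 (Cmod_root_theta theta theta_root)), !Cmod_R.
pose proof sqrt2_bounds. pose proof (Rabs_pos (M n)). nra.
Qed.

Lemma M_window n (r := Rabs (M (S n)) + 3 / 2 * Rabs (M n)) :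
  (exists j, (n <= j <= n + 3)%nat /\ r / 10 <= M j) /\
  (exists j, (n <= j <= n + 3)%nat /\ M j <= 4 * L - r / 10).
Proof.
destruct (M_step n) as (e1 & He1 & H2). destruct (M_step (S n)) as (e2 & He2 & H3).
assert (Hcases :
  (r / 10 <= M n \/ r / 10 <= M (S n) \/ r / 10 <= M (S (S n)) \/ r / 10 <= M (S (S (S n)))) /\
  (M n <= 4 * L - r / 10 \/ M (S n) <= 4 * L - r / 10 \/
   M (S (S n)) <= 4 * L - r / 10 \/ M (S (S (S n))) <= 4 * L - r / 10)).
{ rewrite H3, H2. unfold r.
  destruct (Rcase_abs (M n)) as [Ha|Ha]; destruct (Rcase_abs (M (S n))) as [Hb|Hb];
    [rewrite (Rabs_left (M n)), (Rabs_left (M (S n))) by lra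
    |rewrite (Rabs_left (M n)), (Rabs_right (M (S n))) by lra
    |rewrite (Rabs_right (M n)), (Rabs_left (M (S n))) by lra
    |rewrite (Rabs_right (M n)), (Rabs_right (M (S n))) by lra].
  - split; lra.
  - split; [lra|]. destruct (Rle_dec (M (S n)) (-4 * M n)); lra.
  - split; [|lra]. destruct (Rle_dec (- M (S n)) (4 * M n)); lra.
  - split; lra. }
destruct Hcases as [Hge Hle]. split.
- destruct Hge as [H|[H|[H|H]]]; eexists; (split; [|exact H]); lia.
- destruct Hle as [H|[H|[H|H]]]; eexists; (split; [|exact H]); lia.
Qed.

Lemma log_components_le : exists C d, 0 < d /\ forall n,
  la (n + 5)%nat <= C + 2 * L * INR n - d * sqrt 2 ^ n /\
  lb (n + 5)%nat <= C + 2 * L * INR n - d * sqrt 2 ^ n.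
Proof.
set (D0 := Cmod (xi theta M 0) - 8 * L).
exists (Rmax (la 1%nat) (lb 1%nat) + 14 * L), (D0 / 10). split; [unfold D0; lra|].
intro n.
pose proof (Cmod_xi_ge n) as Hgrow. pose proof (Cmod_xi_le n) as Hup. fold D0 in Hgrow.
assert (0 <= 8 * L) by lra.
destruct (M_window n) as [(j & Hj & Hlarge) (j' & Hj' & Hsmall)].
pose proof (le_add_of_increments la (fun n => - M n) (2 * L) ltac:(lra) la_step
  ltac:(intro m; specialize (la_step_M m); lra) j (n + 5)%nat ltac:(lia)) as Hla.
pose proof (le_add_of_increments lb M (2 * L) ltac:(lra) lb_step lb_step_M
  j' (n + 5)%nat ltac:(lia)) as Hlb.
rewrite plus_INR in Hla, Hlb. simpl INR in Hla, Hlb.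
pose proof (Rmax_l (la 1%nat) (lb 1%nat)). pose proof (Rmax_r (la 1%nat) (lb 1%nat)).
split; lra.
Qed.

End LogDynamics.

Lemma ln_sq_mul (c y : R) : c <> 0 -> y <> 0 -> ln ((c * y) ^ 2) = ln (c ^ 2) + ln (y ^ 2).
Proof.
intros Hc Hy. rewrite Rpow_mult_distr. apply ln_mult; apply pow2_gt_0; assumption.
Qed.

Lemma ln_le_of_mul_le (u p q c : R) : 0 < u -> 0 < p -> 0 < q -> 0 < c ->
  u * p <= c * q -> ln u <= ln c + ln q - ln p.
Proof.
intros Hu Hp Hq Hc Hle.
assert (Hln : ln (u * p) <= ln (c * q)) by (apply ln_le; [nra | exact Hle]).
rewrite !ln_mult in Hln by assumption. lra.
Qed.

Lemma vnorm_pos (u : vec) : fst u <> 0 -> 0 < vnorm u.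
Proof.
intros Hu. apply sqrt_lt_R0. unfold dot.
assert (0 < fst u * fst u) by (apply Rsqr_pos_lt; exact Hu).
assert (0 <= snd u * snd u) by apply Rle_0_sqr. lra.
Qed.

Lemma ln_vnorm_le (u : vec) (B : R) : fst u <> 0 -> snd u <> 0 ->
  ln (fst u ^ 2) <= B -> ln (snd u ^ 2) <= B -> 2 * ln (vnorm u) <= ln 2 + B.
Proof.
intros H1 H2 Hb1 Hb2.
pose proof (vnorm_pos u H1) as Hpos.
assert (Hsq : vnorm u * vnorm u = fst u ^ 2 + snd u ^ 2)
  by (unfold vnorm; rewrite sqrt_sqrt; unfold dot; [ring | nra]).
assert (Hln2 : 2 * ln (vnorm u) = ln (fst u ^ 2 + snd u ^ 2))
  by (rewrite <- Hsq, ln_mult by exact Hpos; ring).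
assert (Ha : 0 < fst u ^ 2) by (apply pow2_gt_0; exact H1).
assert (Hb : 0 < snd u ^ 2) by (apply pow2_gt_0; exact H2).
rewrite Hln2.
destruct (Rle_dec (fst u ^ 2) (snd u ^ 2)).
- assert (ln (fst u ^ 2 + snd u ^ 2) <= ln (2 * snd u ^ 2)) by (apply ln_le; lra).
  rewrite ln_mult in * by lra. lra.
- assert (ln (fst u ^ 2 + snd u ^ 2) <= ln (2 * fst u ^ 2)) by (apply ln_le; lra).
  rewrite ln_mult in * by lra. lra.
Qed.

Lemma bb_quotients (lam gam a : R) (X : vec) : 0 < lam -> a <> 0 -> fst X <> 0 ->
  let X' := vsub X (vscale a (Amul lam X)) in
  let s := vsub X' X in
  let y := vsub (Amul lam X') (Amul lam X) in
  gam * (dot s s / dot s y) + (1 - gam) * (dot s y / dot y y) =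
  bb_alpha lam gam (fst (Amul lam X) ^ 2) (snd (Amul lam X) ^ 2).
Proof.
intros Hlam Ha HX X' s y.
set (P := fst (Amul lam X) ^ 2). set (Q := snd (Amul lam X) ^ 2).
assert (HP : 0 < P) by (apply pow2_gt_0; exact HX).
assert (HQ : 0 <= Q) by apply pow2_ge_0.
assert (Hss : dot s s = a ^ 2 * (P + Q))
  by (unfold s, X', P, Q, dot, vsub, vscale, Amul; simpl; ring).
assert (Hsy : dot s y = a ^ 2 * (P + lam * Q))
  by (unfold s, y, X', P, Q, dot, vsub, vscale, Amul; simpl; ring).
assert (Hyy : dot y y = a ^ 2 * (P + lam ^ 2 * Q))
  by (unfold y, X', P, Q, dot, vsub, vscale, Amul; simpl; ring).
assert (0 < a ^ 2) by (apply pow2_gt_0; exact Ha).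
assert (0 <= lam * Q) by nra.
assert (0 <= lam ^ 2 * Q) by (apply Rmult_le_pos; [apply pow2_ge_0 | exact HQ]).
rewrite Hss, Hsy, Hyy. unfold bb_alpha. field. repeat split; lra.
Qed.

Section GradientIteration.

Variables (lam : R) (x : nat -> vec) (alpha gamma : nat -> R) (theta : C).
Hypothesis lam_gt1 : 1 < lam.
Hypothesis x_step : forall k : nat, (1 <= k)%nat ->
  x (S k) = vsub (x k) (vscale (alpha k) (Amul lam (x k))).
Hypothesis alpha1_pos : 0 < alpha 1%nat.
Hypothesis alpha_step : forall k : nat, (2 <= k)%nat ->
  let s := vsub (x k) (x (k - 1)%nat) in
  let y := vsub (Amul lam (x k)) (Amul lam (x (k - 1)%nat)) in
  alpha k = gamma k * (dot s s / dot s y) + (1 - gamma k) * (dot s y / dot y y).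
Hypothesis gamma_bounds : forall k : nat, (2 <= k)%nat -> 0 < gamma k < 1.
Hypothesis g1_fst : fst (Amul lam (x 1%nat)) <> 0.
Hypothesis g1_snd : snd (Amul lam (x 1%nat)) <> 0.
Hypothesis g2_fst : fst (Amul lam (x 2%nat)) <> 0.
Hypothesis g2_snd : snd (Amul lam (x 2%nat)) <> 0.

Let g (k : nat) : vec := Amul lam (x k).

Lemma grad_succ k : (1 <= k)%nat ->
  fst (g (S k)) = (1 - alpha k) * fst (g k) /\ snd (g (S k)) = (1 - lam * alpha k) * snd (g k).
Proof.
intros Hk. unfold g. rewrite (x_step k Hk). unfold Amul, vsub, vscale; simpl. split; ring.
Qed.

Lemma alpha_succ k : (1 <= k)%nat -> alpha k <> 0 -> fst (g k) <> 0 ->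
  alpha (S k) = bb_alpha lam (gamma (S k)) (fst (g k) ^ 2) (snd (g k) ^ 2).
Proof.
intros Hk Ha Hg.
rewrite (alpha_step (S k)) by lia. cbv zeta.
replace (S k - 1)%nat with k by lia.
rewrite (x_step k Hk). apply bb_quotients; [lra | exact Ha | exact Hg].
Qed.

Lemma grad_nonzero n :
  fst (g (S n)) <> 0 /\ snd (g (S n)) <> 0 /\ 0 < alpha (S n) /\
  fst (g (S (S n))) <> 0 /\ snd (g (S (S n))) <> 0.
Proof.
induction n as [|n (H1 & H2 & Ha & H1' & H2')].
- repeat split; assumption.
- assert (HP : 0 < fst (g (S n)) ^ 2) by (apply pow2_gt_0; exact H1).
  assert (HQ : 0 < snd (g (S n)) ^ 2) by (apply pow2_gt_0; exact H2).
  pose proof (gamma_bounds (S (S n)) ltac:(lia)) as Hgam.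
  destruct (grad_succ (S (S n)) ltac:(lia)) as [-> ->].
  rewrite (alpha_succ (S n) ltac:(lia) ltac:(lra) H1).
  pose proof (bb_alpha_pos _ _ _ _ lam_gt1 Hgam HP HQ).
  pose proof (bb_alpha_lt1 _ _ _ _ lam_gt1 Hgam HP HQ).
  pose proof (one_sub_lam_bb_alpha_neq0 _ _ _ _ lam_gt1 Hgam HP HQ).
  repeat split; try assumption; apply Rmult_integral_contrapositive; split; (assumption || lra).
Qed.

(* Log coordinates are shifted by one (la n = ln (g_{n+1}^(1))^2), so that the recurrences of
   LogDynamics hold from n = 0 on and xi theta (fun n => log_ratio (S n)) 0 is the paper's ξ_2. *)
Let L := ln lam.
Let la (n : nat) : R := ln (fst (g (S n)) ^ 2).
Let lb (n : nat) : R := ln (snd (g (S n)) ^ 2).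
Let log_ratio (k : nat) : R := ln (fst (g k) ^ 2 / snd (g k) ^ 2).

Let ln_lam_sq : ln (lam ^ 2) = 2 * L.
Proof. unfold L. rewrite ln_pow by lra. simpl INR. ring. Qed.

Lemma log_ratio_eq n : log_ratio (S n) = la n - lb n.
Proof.
destruct (grad_nonzero n) as (H1 & H2 & _).
apply ln_div; apply pow2_gt_0; assumption.
Qed.

Section OneStep.

Variable n : nat.

Let P := fst (g (S n)) ^ 2.
Let Q := snd (g (S n)) ^ 2.
Let gam := gamma (S (S n)).
Let al := bb_alpha lam gam P Q.

Let P_pos : 0 < P.
Proof. apply pow2_gt_0, (grad_nonzero n). Qed.

Let Q_pos : 0 < Q.
Proof. apply pow2_gt_0, (grad_nonzero n). Qed.

Let gam_bounds : 0 < gam < 1.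
Proof. apply gamma_bounds; lia. Qed.

Let lam_sq_pos : 0 < lam ^ 2.
Proof. apply pow_lt; lra. Qed.

Let grad_bb_succ :
  fst (g (S (S (S n)))) = (1 - al) * fst (g (S (S n))) /\
  snd (g (S (S (S n)))) = (1 - lam * al) * snd (g (S (S n))).
Proof.
destruct (grad_nonzero n) as (H1 & _ & Ha & _).
unfold al, gam, P, Q. rewrite <- (alpha_succ (S n) ltac:(lia) ltac:(lra) H1).
apply grad_succ; lia.
Qed.

Let la_succ : la (S (S n)) = ln ((1 - al) ^ 2) + la (S n).
Proof.
pose proof (bb_alpha_lt1 _ _ _ _ lam_gt1 gam_bounds P_pos Q_pos) as Hal. fold al in Hal.
unfold la. rewrite (proj1 grad_bb_succ), ln_sq_mul; [reflexivity | apply Rgt_not_eq; lra |].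
apply (grad_nonzero n).
Qed.

Let lb_succ : lb (S (S n)) = ln ((1 - lam * al) ^ 2) + lb (S n).
Proof.
unfold lb. rewrite (proj2 grad_bb_succ), ln_sq_mul; [reflexivity | |].
- apply (one_sub_lam_bb_alpha_neq0 _ _ _ _ lam_gt1 gam_bounds P_pos Q_pos).
- apply (grad_nonzero n).
Qed.

Lemma ln_sq_fst_grad_step : la (S (S n)) <= la (S n) + 2 * L /\
  la (S (S n)) <= la (S n) + 2 * L - log_ratio (S n).
Proof.
pose proof (bb_alpha_pos _ _ _ _ lam_gt1 gam_bounds P_pos Q_pos) as Hal0.
pose proof (bb_alpha_lt1 _ _ _ _ lam_gt1 gam_bounds P_pos Q_pos) as Hal1.
pose proof (bb_first_component_bound _ _ _ _ lam_gt1 gam_bounds P_pos Q_pos) as Hbound.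
fold al in Hal0, Hal1, Hbound.
assert (Hc : 0 < (1 - al) ^ 2) by (apply pow2_gt_0; lra).
pose proof ln_lam_sq.
rewrite la_succ, log_ratio_eq.
split.
- assert (ln ((1 - al) ^ 2) <= ln (lam ^ 2)) by (apply ln_le; [exact Hc | apply pow_incr; lra]).
  lra.
- pose proof (ln_le_of_mul_le _ _ _ _ Hc P_pos Q_pos lam_sq_pos Hbound).
  unfold la, lb, P, Q in *. lra.
Qed.

Lemma ln_sq_snd_grad_step : lb (S (S n)) <= lb (S n) + 2 * L /\
  lb (S (S n)) <= lb (S n) + 2 * L + log_ratio (S n).
Proof.
pose proof (one_sub_lam_bb_alpha_neq0 _ _ _ _ lam_gt1 gam_bounds P_pos Q_pos) as Hneq.
destruct (bb_second_component_bound _ _ _ _ lam_gt1 gam_bounds P_pos Q_pos) as [Hb1 Hb2].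
fold al in Hneq, Hb1, Hb2.
assert (Hc : 0 < (1 - lam * al) ^ 2) by (apply pow2_gt_0; exact Hneq).
pose proof ln_lam_sq.
rewrite lb_succ, log_ratio_eq.
split.
- assert (ln ((1 - lam * al) ^ 2) <= ln (lam ^ 2)) by (apply ln_le; assumption).
  lra.
- pose proof (ln_le_of_mul_le _ _ _ _ Hc Q_pos P_pos lam_sq_pos Hb2).
  unfold la, lb, P, Q in *. lra.
Qed.

Lemma ln_grad_ratio_step : exists e, 0 <= e <= 2 * L /\
  log_ratio (S (S (S n))) = log_ratio (S (S n)) - 2 * log_ratio (S n) + e.
Proof.
pose proof (bb_alpha_lt1 _ _ _ _ lam_gt1 gam_bounds P_pos Q_pos) as Hal.
pose proof (one_sub_lam_bb_alpha_neq0 _ _ _ _ lam_gt1 gam_bounds P_pos Q_pos) as Hneq.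
destruct (bb_component_ratio _ _ _ _ lam_gt1 gam_bounds P_pos Q_pos) as (E & HE & Hratio).
fold al in Hal, Hneq, Hratio.
assert (Ha : 0 < (1 - al) ^ 2) by (apply pow2_gt_0; lra).
assert (Hb : 0 < (1 - lam * al) ^ 2) by (apply pow2_gt_0; exact Hneq).
exists (ln E). split.
- split.
  + rewrite <- ln_1. apply ln_le; lra.
  + rewrite <- ln_lam_sq. apply ln_le; lra.
- assert (Hln : ln ((1 - al) ^ 2 * P ^ 2) = ln ((1 - lam * al) ^ 2 * Q ^ 2 * E))
    by (rewrite Hratio; reflexivity).
  assert (0 < P ^ 2) by (apply pow_lt; exact P_pos).
  assert (0 < Q ^ 2) by (apply pow_lt; exact Q_pos).
  assert (0 < (1 - lam * al) ^ 2 * Q ^ 2) by (apply Rmult_lt_0_compat; assumption).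
  rewrite !ln_mult, (ln_pow P 2), (ln_pow Q 2) in Hln by (assumption || lra). simpl INR in Hln.
  rewrite !log_ratio_eq, la_succ, lb_succ. unfold la, lb, P, Q in *. lra.
Qed.

End OneStep.

Hypothesis theta_root : Cplus (Cminus (Cmult theta theta) theta) (RtoC 2) = RtoC 0.
Hypothesis xi2_large :
  Cmod (Cplus (RtoC (log_ratio 2)) (Cmult (Cminus theta (RtoC 1)) (RtoC (log_ratio 1))))
    > 8 * ln lam.

Lemma ln_grad_norm_le : exists A d, 0 < d /\ forall n,
  0 < vnorm (g (n + 6)) /\ ln (vnorm (g (n + 6))) <= A + L * INR n - d * sqrt 2 ^ n.
Proof.
assert (L_nonneg : 0 <= L) by (unfold L; rewrite <- ln_1; apply ln_le; lra).
destruct (log_components_le L theta la lb (fun n => log_ratio (S n)) L_nonneg theta_root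
  (fun n => proj1 (ln_sq_fst_grad_step n)) (fun n => proj2 (ln_sq_fst_grad_step n))
  (fun n => proj1 (ln_sq_snd_grad_step n)) (fun n => proj2 (ln_sq_snd_grad_step n))
  ln_grad_ratio_step xi2_large) as (C & d & Hd & Hbound).
exists ((ln 2 + C) / 2), (d / 2). split; [lra|]. intro n.
replace (n + 6)%nat with (S (n + 5)) by lia.
destruct (grad_nonzero (n + 5)) as (H1 & H2 & _).
destruct (Hbound n) as [Ha Hb].
split; [apply vnorm_pos; exact H1|].
pose proof (ln_vnorm_le _ _ H1 H2 Ha Hb). lra.
Qed.

End GradientIteration.

Theorem theorem2 (lam : R) (x : nat -> vec) (alpha gamma : nat -> R) (theta : C) :
  1 < lam ->
  (forall k : nat, (1 <= k)%nat ->
     x (S k) = vsub (x k) (vscale (alpha k) (Amul lam (x k)))) ->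
  0 < alpha 1%nat ->
  (forall k : nat, (2 <= k)%nat ->
     let s := vsub (x k) (x (k - 1)%nat) in
     let y := vsub (Amul lam (x k)) (Amul lam (x (k - 1)%nat)) in
     alpha k = gamma k * (dot s s / dot s y) + (1 - gamma k) * (dot s y / dot y y)) ->
  (forall k : nat, (2 <= k)%nat -> 0 < gamma k < 1) ->
  fst (Amul lam (x 1%nat)) <> 0 -> snd (Amul lam (x 1%nat)) <> 0 ->
  fst (Amul lam (x 2%nat)) <> 0 -> snd (Amul lam (x 2%nat)) <> 0 ->
  Cplus (Cminus (Cmult theta theta) theta) (RtoC 2) = RtoC 0 ->
  let q := fun k : nat => (fst (Amul lam (x k)))^2 / (snd (Amul lam (x k)))^2 in
  let M := fun k : nat => ln (q k) in
  Cmod (Cplus (RtoC (M 2%nat)) (Cmult (Cminus theta (RtoC 1)) (RtoC (M 1%nat))))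
    > 8 * ln lam ->
  R_superlinear (fun k => vnorm (Amul lam (x k))).
Proof.
intros Hlam Hstep Halpha1 Hbb Hgam H11 H12 H21 H22 Htheta q M Hxi.
destruct (ln_grad_norm_le lam x alpha gamma theta Hlam Hstep Halpha1 Hbb Hgam
  H11 H12 H21 H22 Htheta Hxi) as (A & d & Hd & Hbound).
assert (Hsqrt2 : 1 < sqrt 2) by (pose proof sqrt2_bounds; lra).
exact (R_superlinear_of_ln_le_geometric _ 6 A (ln lam) d (sqrt 2) Hsqrt2 Hd Hbound).
Qed.
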